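(* Let $d\ge 3$ be an integer and let $\ell \ge 5$ be a prime. Let $(x,y)$ be an integer solution of \[ d(2x+d+1)\left(x^2+(d+1)x+\frac{d(d+1)}{2}\right)=2y^\ell . \] Then there are rational numbers $y_1,y_2$ and a pair $(\alpha,\beta)\in\mathcal{A}_d$ such that \[ 2x+d+1=\alpha y_1^\ell, \qquad x^2+(d+1)x+\frac{d(d+1)}{2}=\beta y_2^\ell . \] Moreover, if $3\le d\le 50$ then $y_1$ and $y_2$ are integers.
   Context: For a prime $q$ let $\mu_q=\operatorname{ord}_q(d^2-1)$ and $\nu_q=\operatorname{ord}_q(d)$. To each prime $q$ associate a finite set $T_q\subset\mathbb{Z}^2$: if $q\nmid d(d^2-1)$, $T_q=\{(0,0)\}$. For $q=2$: $T_2=\{(0,1-\nu_2)\}$ if $2\mid d$; $T_2=\{(1,0),(\mu_2/2,1-\mu_2/2),(3-\mu_2,\mu_2-2)\}$ if $2\nmid d$ and $\mu_2$ is even; $T_2=\{(1,0),(3-\mu_2,\mu_2-2)\}$ if $2\nmid d$ and $\mu_2$ is odd. For odd $q\mid d$: $T_q=\{(-\nu_q,0),(0,-\nu_q)\}$. For odd $q\mid d^2-1$: $T_q=\{(0,0),(-\mu_q,\mu_q),(\mu_q/2,-\mu_q/2)\}$ if $\mu_q$ is even, and $T_q=\{(0,0),(-\mu_q,\mu_q)\}$ if $\mu_q$ is odd. Then $\mathcal{A}_d$ is the (finite) set of pairs of positive rationals $(\alpha,\beta)$ with $(\operatorname{ord}_q(\alpha),\operatorname{ord}_q(\beta))\in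 T_q$ for every prime $q$. *)

From HB Require Import structures.
From mathcomp Require Import all_boot all_order all_algebra.
Set Implicit Arguments. Unset Strict Implicit. Unset Printing Implicit Defensive.
Import Order.TTheory GRing.Theory Num.Theory.
Local Open Scope ring_scope.

Definition ordq (q : nat) (r : rat) : int :=
  (logn q `|numq r|%N)%:Z - (logn q `|denq r|%N)%:Z.

Definition mu (d q : nat) : nat := logn q (d ^ 2 - 1)%N.
Definition nu (d q : nat) : nat := logn q d.

Definition inT (d q : nat) (a b : int) : Prop :=
  let m := (mu d q)%:Z in
  let h := ((mu d q)./2)%:Z in
  let n := (nu d q)%:Z in
  if ~~ (q %| d * (d ^ 2 - 1))%N then (a, b) = (0, 0)
  else if q == 2%N then
    if (2 %| d)%N then (a, b) = (0, 1 - n)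
    else if ~~ odd (mu d q) then
      (a, b) = (1, 0) \/ (a, b) = (h, 1 - h) \/ (a, b) = (3 - m, m - 2)
    else (a, b) = (1, 0) \/ (a, b) = (3 - m, m - 2)
  else if (q %| d)%N then (a, b) = (- n, 0) \/ (a, b) = (0, - n)
  else
    if ~~ odd (mu d q) then
      (a, b) = (0, 0) \/ (a, b) = (- m, m) \/ (a, b) = (h, - h)
    else (a, b) = (0, 0) \/ (a, b) = (- m, m).

Definition in_A (d : nat) (alpha beta : rat) : Prop :=
  0 < alpha /\ 0 < beta /\
  forall q : nat, prime q -> inT d q (ordq q alpha) (ordq q beta).

From HB Require Import structures.
From mathcomp Require Import all_boot all_order all_algebra.
From mathcomp Require Import zify ring.
From Stdlib Require Import IndefiniteDescription.
Set Implicit Arguments. Unset Strict Implicit. Unset Printing Implicit Defensive.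
Import Order.TTheory GRing.Theory Num.Theory.

(* With u = 2x + d + 1 and v = x^2 + (d+1)x + d(d+1)/2 the equation reads
   d u v = 2 y^l, and moreover 4v = u^2 + (d^2 - 1).  At a prime q this gives
   ord d + ord u + ord v = ord 2 + l ord y, and ord 4 + ord v = min(2 ord u, mu_q)
   whenever 2 ord u <> mu_q.  Solving these relations modulo l (using that 3 is
   invertible mod l) shows that (ord_q u, ord_q v) is congruent mod l to a pair of
   T_q; the quotients by l are the valuations of y1 and y2.  For d <= 50 every
   entry of every T_q is below 5 <= l, so these valuations are nonnegative and
   y1, y2 are integers. *)

Section RationalValuation.
Local Open Scope ring_scope.

Lemma ordq_frac q (n m : int) : n != 0 -> m != 0 ->
  ordq q (n%:~R / m%:~R) = (logn q `|n|%N)%:Z - (logn q `|m|%N)%:Z.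
Proof.
move=> n0 m0; set r : rat := n%:~R / m%:~R.
have r0 : r != 0 by rewrite mulf_neq0 ?invr_eq0 ?intr_eq0.
have /eqP cross : numq r * m = n * denq r.
  by apply: (@intr_inj rat); rewrite !intrM numqE /r; field; rewrite intr_eq0.
move: cross => /eqP /(congr1 absz) /(congr1 (logn q)).
by rewrite !abszM !lognM ?absz_gt0 ?numq_eq0 ?denq_neq0 // /ordq; lia.
Qed.

Lemma ordq_int q (n : int) : ordq q n%:~R = (logn q `|n|%N)%:Z.
Proof. by rewrite /ordq numq_int denq_int logn1 subr0. Qed.

Lemma ordq_nat q n : ordq q n%:R = (logn q n)%:Z.
Proof. exact: ordq_int q n. Qed.

Lemma ordq1 q : ordq q 1 = 0.
Proof. by rewrite /ordq /= logn1. Qed.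

Lemma ordq_mul q (r s : rat) : r != 0 -> s != 0 ->
  ordq q (r * s) = ordq q r + ordq q s.
Proof.
move=> r0 s0; have nr : numq r != 0 by rewrite numq_eq0.
have ns : numq s != 0 by rewrite numq_eq0.
rewrite -[r]divq_num_den -[s]divq_num_den mulf_div -!intrM.
rewrite !ordq_frac ?mulf_neq0 ?denq_neq0 // !abszM.
by rewrite !lognM ?absz_gt0 ?denq_neq0 //; lia.
Qed.

Lemma ordqV q (r : rat) : r != 0 -> ordq q r^-1 = - ordq q r.
Proof.
move=> r0; have := @ordq_mul q _ _ (invr_neq0 r0) r0.
by rewrite mulVf // ordq1; lia.
Qed.

Lemma ordq_div q (r s : rat) : r != 0 -> s != 0 ->
  ordq q (r / s) = ordq q r - ordq q s.
Proof. by move=> r0 s0; rewrite ordq_mul ?invr_neq0 // ordqV. Qed.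

Lemma ordqXn q (r : rat) n : r != 0 -> ordq q (r ^+ n) = n%:Z * ordq q r.
Proof.
move=> r0; elim: n => [|n IH]; first by rewrite expr0 ordq1 mul0r.
by rewrite exprS ordq_mul ?expf_neq0 // IH; lia.
Qed.

Lemma ordqXz q (r : rat) (k : int) : r != 0 -> ordq q (r ^ k) = k * ordq q r.
Proof.
move=> r0; case: k => n; first exact: ordqXn.
by rewrite NegzE -exprnN ordqV ?expf_neq0 // ordqXn; lia.
Qed.

Lemma ordq_prime q p : prime p -> ordq q p%:R = (q == p)%:Z.
Proof. by move=> p_pr; rewrite ordq_nat logn_prime. Qed.

Lemma ordq_ge0_int (r : rat) :
  (forall q, prime q -> 0 <= ordq q r) -> exists z : int, r = z%:~R.
Proof.
move=> ordq_ge0; exists (numq r).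
have [den_le1|den_gt1] := leqP `|denq r| 1.
  have den1 : denq r = 1 by have := denq_gt0 r; lia.
  by rewrite -[LHS]divq_num_den den1 divr1.
have p_pr := pdiv_prime den_gt1; have p_den := pdiv_dvd `|denq r|.
have p_num : ~~ (pdiv `|denq r| %| `|numq r|)%N.
  apply/negP => /coprime_dvdl /(_ (coprime_num_den r)).
  by rewrite prime_coprime // p_den.
have : (0 < logn (pdiv `|denq r|) `|denq r|)%N.
  by rewrite logn_gt0 mem_primes p_pr absz_gt0 denq_neq0.
by have := ordq_ge0 _ p_pr; rewrite /ordq logn_coprime ?prime_coprime //; lia.
Qed.

Lemma prod_primes_gt0 (s : seq nat) (f : nat -> int) :
  all prime s -> 0 < \prod_(q <- s) (q%:R : rat) ^ f q.
Proof.
move=> /allP s_pr; rewrite big_seq_cond; apply: prodr_gt0 => q /andP[q_s _].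
by rewrite exprz_gt0 // ltr0n prime_gt0 // s_pr.
Qed.

Lemma ordq_prod_primes (s : seq nat) (f : nat -> int) p :
  prime p -> all prime s -> uniq s ->
  ordq p (\prod_(q <- s) (q%:R : rat) ^ f q) = if p \in s then f p else 0.
Proof.
move=> p_pr; elim: s => [|q s IH] /=; first by rewrite big_nil ordq1.
case/andP=> q_pr s_pr /andP[q_s s_uniq].
have q0 : (q%:R : rat) != 0 by rewrite pnatr_eq0 -lt0n prime_gt0.
have prod0 : \prod_(q <- s) (q%:R : rat) ^ f q != 0.
  by rewrite gt_eqF // (@prod_primes_gt0 s f s_pr).
rewrite big_cons ordq_mul ?expfz_neq0 // IH // ordqXz // ordq_prime // in_cons.
by case: (eqVneq p q) => [->|] /=; [rewrite (negPf q_s) | ]; lia.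
Qed.

Lemma exists_rat_ordq (N : nat) (f : nat -> int) : (0 < N)%N ->
  (forall q, prime q -> ~~ (q %| N)%N -> f q = 0) ->
  exists2 r : rat, 0 < r & forall q, prime q -> ordq q r = f q.
Proof.
move=> N_gt0 f_supp; exists (\prod_(q <- primes N) (q%:R : rat) ^ f q).
  exact/prod_primes_gt0/all_prime_primes.
move=> q q_pr; rewrite ordq_prod_primes ?all_prime_primes ?primes_uniq //.
by rewrite mem_primes q_pr N_gt0 /=; case: ifPn => // /f_supp ->.
Qed.

Lemma exists_power_cofactor (l n N : nat) (a : nat -> int) :
  (0 < l)%N -> (0 < n)%N -> (0 < N)%N ->
  (forall q, prime q -> ~~ (q %| N)%N -> a q = 0) ->
  (forall q, prime q -> (l%:Z %| (logn q n)%:Z - a q)%Z) ->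
  exists r : rat, [/\ 0 < r, forall q, prime q -> ordq q (n%:R / r ^+ l) = a q
    & (forall q, prime q -> a q < l%:Z) -> exists z : int, r = z%:~R].
Proof.
move=> l_gt0 n_gt0 N_gt0 a_supp l_dvd.
pose k q := (((logn q n)%:Z - a q) %/ l%:Z)%Z.
have k_def q : prime q -> (logn q n)%:Z = a q + k q * l%:Z.
  by move=> q_pr; rewrite divzK ?l_dvd // addrC subrK.
have [||r r_gt0 ordq_r] := @exists_rat_ordq (n * N) k.
- by rewrite muln_gt0 n_gt0.
- move=> q q_pr; rewrite Euclid_dvdM // negb_or => /andP[q_n q_N].
  by rewrite /k a_supp // logn_coprime ?prime_coprime // div0z.
exists r; split=> // [q q_pr|a_lt].
  rewrite ordq_div ?pnatr_eq0 -?lt0n ?expf_neq0 ?gt_eqF // ordqXn ?gt_eqF //.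
  by rewrite ordq_nat ordq_r // k_def //; lia.
apply: ordq_ge0_int => q q_pr; rewrite ordq_r //.
by have := k_def q q_pr; have := a_lt q q_pr; nia.
Qed.

End RationalValuation.

Lemma two_dvd_mul_sqr_pred d : 2 %| d * (d ^ 2 - 1).
Proof.
have [d_odd|d_even] := boolP (odd d); last by rewrite dvdn_mulr // dvdn2.
have d_gt0 : 0 < d by case: d d_odd.
by rewrite dvdn_mull // dvdn2 oddB ?expn_gt0 ?d_gt0 // oddX d_odd.
Qed.

Lemma sqr_pred_gt0 d : 1 < d -> 0 < d ^ 2 - 1.
Proof. by move=> d_gt1; rewrite subn_gt0 -[1](exp1n 2) ltn_exp2r. Qed.

Lemma coprime_sqr_pred d : 0 < d -> coprime d (d ^ 2 - 1).
Proof.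
by move=> d_gt0; rewrite -(@coprime_pexpl 2) // subn1 coprimenP ?expn_gt0 ?d_gt0.
Qed.

Lemma ndvd_of_dvd_sqr_pred d q : prime q -> 0 < d -> q %| d ^ 2 - 1 -> ~~ (q %| d).
Proof.
move=> q_pr d_gt0; apply: contraL => q_d.
by rewrite -prime_coprime // (coprime_dvdl q_d) // coprime_sqr_pred.
Qed.

Lemma quarter_sqr_pred_gt0 d v : 1 < d -> 4 * v = d ^ 2 - 1 -> 0 < v.
Proof. by move=> d_gt1 four_v; rewrite -(ltn_pmul2l (isT : 0 < 4)) four_v sqr_pred_gt0. Qed.

Lemma inT_coprime d q a b :
  ~~ (q %| d * (d ^ 2 - 1)) -> inT d q a b -> a = 0 /\ b = 0.
Proof. by rewrite /inT => ->; case. Qed.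

(* Writing c = ord_q 2, the sets T_q have the same shape for q = 2 and for odd q:
   they contain (0, c - nu_q), and (-nu_q, 0) for odd q, when q does not divide
   d^2 - 1; they contain (c, 0), (3c - mu_q, mu_q - 2c) and, for even mu_q,
   (mu_q/2, c - mu_q/2) when it does. *)
Section Membership.
Variables (d q : nat).
Hypothesis q_pr : prime q.

Local Notation c := (logn q 2).
Local Notation m := (mu d q).

Lemma logn_two_odd : q != 2 -> c = 0.
Proof. by move=> q2; rewrite logn_prime // (negPf q2). Qed.

Lemma inT_ndvd_sqr_pred_l : ~~ (q %| d ^ 2 - 1) -> inT d q 0 (c%:Z - (nu d q)%:Z).
Proof.
move=> q_m; rewrite /inT Euclid_dvdM // (negPf q_m) orbF /nu.
have [q_d|q_d] := boolP (q %| d); last first.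
  have q2 : q != 2.
    apply: contraNneq q_m => q2; move: q_d; rewrite q2 => q_d.
    by have := two_dvd_mul_sqr_pred d; rewrite Euclid_dvdM // (negPf q_d).
  by rewrite /= logn_two_odd // logn_coprime // prime_coprime.
case: eqP => [q2|/eqP q2]; last by rewrite /= logn_two_odd // sub0r; right.
by move: q_d; rewrite q2 => ->; rewrite logn_prime.
Qed.

Lemma inT_ndvd_sqr_pred_r :
  q != 2 -> ~~ (q %| d ^ 2 - 1) -> inT d q (- (nu d q)%:Z) 0.
Proof.
move=> q2 q_m; rewrite /inT Euclid_dvdM // (negPf q_m) orbF /nu (negPf q2).
have [q_d|q_d] := boolP (q %| d); first by left.
by rewrite /= logn_coprime // prime_coprime.
Qed.

Lemma inT_dvd_sqr_pred : ~~ (q %| d) -> q %| d ^ 2 - 1 ->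
  [/\ inT d q c 0, inT d q (3 * c%:Z - m%:Z) (m%:Z - 2 * c%:Z)
    & ~~ odd m -> inT d q (m./2)%:Z (c%:Z - (m./2)%:Z)].
Proof.
move=> q_d q_m; rewrite /inT Euclid_dvdM // q_m orbT (negPf q_d) /=.
case: eqP => [q2|/eqP q2].
  move: q_d; rewrite q2 => /negPf -> /=; rewrite logn_prime //= !mulr1.
  split; first by case: ifP => _; left.
    by case: ifP => _; right => //; right.
  by move=> ->; right; left.
rewrite logn_two_odd //= !mulr0 sub0r subr0.
split; first by case: ifP => _; left.
  by case: ifP => _; right => //; left.
by move=> ->; right; right; congr pair; lia.
Qed.

End Membership.

Lemma mu_le d q : d <= 50 -> prime q -> mu d q <= (if q == 2 then 6 else 4).
Proof.
move=> d_le q_pr; have d_iota : d \in iota 0 51 by rewrite mem_iota.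
case: eqP => [->|/eqP q2].
  exact: (allP (isT : all (fun d => mu d 2 <= 6) (iota 0 51))).
have [->|/eqP q3] := eqVneq q 3.
  exact: (allP (isT : all (fun d => mu d 3 <= 4) (iota 0 51))).
have q_ge5 : 5 <= q by have := prime_gt1 q_pr; case: q q2 q3 q_pr => [|[|[|[|[|q]]]]].
have [m_eq0|m_gt0] := posnP (d ^ 2 - 1); first by rewrite /mu m_eq0 logn0.
rewrite leqNgt; apply/negP => m_ge5.
have : q ^ mu d q <= d ^ 2 - 1 by apply: dvdn_leq => //; exact: pfactor_dvdnn.
have : 5 ^ 5 <= q ^ mu d q.
  by apply: (@leq_trans (q ^ 5)); [rewrite leq_exp2r | rewrite leq_exp2l ?prime_gt1].
have : d ^ 2 <= 50 ^ 2 by rewrite leq_exp2r.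
by rewrite [5 ^ 5]/= [50 ^ 2]/=; lia.
Qed.

Lemma inT_lt5 d q a b : d <= 50 -> prime q -> inT d q a b -> (a < 5)%R /\ (b < 5)%R.
Proof.
move=> d_le q_pr; have := @mu_le d q d_le q_pr; rewrite /inT.
have half_le : (mu d q)./2 <= mu d q by rewrite -divn2 leq_div.
case: eqP => _ m_le;
by repeat case: ifP => _; repeat case=> [[-> ->]|]; try case=> -> ->; lia.
Qed.

Lemma logn_addl q a b : prime q -> 0 < a -> 0 < b ->
  logn q a < logn q b -> logn q (a + b) = logn q a.
Proof.
move=> q_pr a_gt0 b_gt0 lt_ab; set k := logn q a.
have qk_a : q ^ k %| a by rewrite pfactor_dvdn.
have qk1_b : q ^ k.+1 %| b by rewrite pfactor_dvdn.
have qk_b : q ^ k %| b by apply: dvdn_trans qk1_b; rewrite dvdn_exp2l.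
apply/eqP; rewrite eqn_leq -pfactor_dvdn ?addn_gt0 ?a_gt0 // dvdn_add // andbT.
rewrite leqNgt -pfactor_dvdn ?addn_gt0 ?a_gt0 //; apply/negP => qk1_ab.
have : q ^ k.+1 %| a by rewrite -(dvdn_addl _ qk1_b).
by rewrite pfactor_dvdn // ltnn.
Qed.

Section LocalAnalysis.
Variables (d l q u v y : nat).
Hypotheses (q_pr : prime q) (l_coprime3 : coprime l 3) (d_gt1 : 1 < d).
Hypotheses (u_gt0 : 0 < u) (v_gt0 : 0 < v) (y_gt0 : 0 < y).
Hypotheses (duv : d * u * v = 2 * y ^ l) (four_v : 4 * v = u ^ 2 + (d ^ 2 - 1)).

Local Notation U := (logn q u).
Local Notation V := (logn q v).
Local Notation c := (logn q 2).

Let d_gt0 : 0 < d. Proof. exact: ltnW. Qed.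

Lemma logn_duv : nu d q + U + V = c + l * logn q y.
Proof.
have := congr1 (logn q) duv.
by rewrite !lognM ?muln_gt0 ?d_gt0 ?u_gt0 ?expn_gt0 ?y_gt0 // lognX.
Qed.

Lemma logn_four_v : 2 * c + V = logn q (u ^ 2 + (d ^ 2 - 1)).
Proof. by rewrite -four_v lognM // -[4]/(2 ^ 2) lognX. Qed.

Lemma dvd_sqr_pred_of_dvd : q %| u -> q %| 4 * v -> q %| d ^ 2 - 1.
Proof.
have -> : d ^ 2 - 1 = 4 * v - u ^ 2 by rewrite four_v addKn.
by move=> q_u q_v; rewrite dvdn_sub // dvdn_exp.
Qed.

Lemma residues_ndvd_sqr_pred : ~~ (q %| d ^ 2 - 1) ->
  exists a b : int,
    [/\ inT d q a b, (l%:Z %| (U%:Z - a)%R)%Z & (l%:Z %| (V%:Z - b)%R)%Z].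
Proof.
move=> q_m; have := logn_duv.
have [q_u|q_u] := boolP (q %| u).
  have q_v : ~~ (q %| 4 * v) by apply: contra q_m; exact: dvd_sqr_pred_of_dvd.
  have q2 : q != 2 by apply: contraNneq q_v => ->; rewrite dvdn_mulr.
  have V0 : V = 0.
    by rewrite logn_coprime // prime_coprime //; apply: contra q_v; exact: dvdn_mull.
  exists (- (nu d q)%:Z)%R, 0; split; first exact: inT_ndvd_sqr_pred_r.
    by apply/dvdzP; exists (Posz (logn q y)); move: (logn_two_odd q2); lia.
  by rewrite V0.
have U0 : U = 0 by rewrite logn_coprime // prime_coprime.
exists 0, (c%:Z - (nu d q)%:Z)%R; split; first exact: inT_ndvd_sqr_pred_l.
  by rewrite U0.
by apply/dvdzP; exists (Posz (logn q y)); lia.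
Qed.

Lemma residues_dvd_sqr_pred : q %| d ^ 2 - 1 ->
  exists a b : int,
    [/\ inT d q a b, (l%:Z %| (U%:Z - a)%R)%Z & (l%:Z %| (V%:Z - b)%R)%Z].
Proof.
move=> q_m; have q_d := ndvd_of_dvd_sqr_pred q_pr d_gt0 q_m.
have [inT1 inT2 inT3] := inT_dvd_sqr_pred q_pr q_d q_m.
have := logn_duv; have := logn_four_v.
rewrite /nu (@logn_coprime q d) ?prime_coprime //.
have u2_gt0 : 0 < u ^ 2 by rewrite expn_gt0 u_gt0.
have logn_u2 : logn q (u ^ 2) = 2 * U by rewrite lognX.
case: (ltngtP (logn q (u ^ 2)) (logn q (d ^ 2 - 1))) => [lt_um|lt_mu|eq_um].
- rewrite logn_addl ?sqr_pred_gt0 // => four_v_val duv_val.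
  have l_dvd : (l%:Z %| (U%:Z - c%:Z)%R)%Z.
    rewrite -(@Gauss_dvdzr l 3 _ l_coprime3).
    by apply/dvdzP; exists (Posz (logn q y)); lia.
  exists (Posz c), 0; split=> //.
  by rewrite subr0 (_ : V%:Z = 2 * (U%:Z - c%:Z))%R ?dvdz_mull //; lia.
- rewrite [u ^ 2 + _]addnC logn_addl ?sqr_pred_gt0 // => four_v_val duv_val.
  exists (3 * c%:Z - (mu d q)%:Z)%R, ((mu d q)%:Z - 2 * c%:Z)%R; split=> //.
    by apply/dvdzP; exists (Posz (logn q y)); rewrite /mu; lia.
  by apply/dvdzP; exists (Posz 0); rewrite /mu; lia.
- have m_even : ~~ odd (mu d q) by rewrite /mu -eq_um logn_u2 oddM.
  have half_m : (mu d q)./2 = U by rewrite /mu -eq_um logn_u2 mul2n doubleK.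
  move=> _ duv_val; exists (Posz (mu d q)./2), (c%:Z - (mu d q)./2%:Z)%R.
  split; [exact: inT3 | by rewrite half_m subrr |].
  by apply/dvdzP; exists (Posz (logn q y)); rewrite half_m; lia.
Qed.

Lemma residues_in_T :
  exists a b : int,
    [/\ inT d q a b, (l%:Z %| (U%:Z - a)%R)%Z & (l%:Z %| (V%:Z - b)%R)%Z].
Proof.
case: (boolP (q %| d ^ 2 - 1)).
  exact: residues_dvd_sqr_pred.
exact: residues_ndvd_sqr_pred.
Qed.

End LocalAnalysis.

Lemma residue_in_T_quarter d q v : prime q -> 1 < d -> 4 * v = d ^ 2 - 1 ->
  exists a : int, inT d q a (logn q v).
Proof.
move=> q_pr d_gt1 four_v; have v_gt0 := quarter_sqr_pred_gt0 d_gt1 four_v.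
have logn_four_v : 2 * logn q 2 + logn q v = mu d q.
  by rewrite /mu -four_v lognM // -[4]/(2 ^ 2) lognX.
have [q_m|q_m] := boolP (q %| d ^ 2 - 1).
  have [_ inT2 _] := inT_dvd_sqr_pred q_pr (ndvd_of_dvd_sqr_pred q_pr (ltnW d_gt1) q_m) q_m.
  exists (3 * (logn q 2)%:Z - (mu d q)%:Z)%R.
  by rewrite (_ : Posz (logn q v) = (mu d q)%:Z - 2 * (logn q 2)%:Z)%R //; lia.
have q2 : q != 2 by apply: contraNneq q_m => ->; rewrite -four_v dvdn_mulr.
exists (- (nu d q)%:Z)%R; rewrite logn_coprime ?prime_coprime //; last first.
  by apply: contra q_m => q_v; rewrite -four_v dvdn_mull.
exact: inT_ndvd_sqr_pred_r.
Qed.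

Local Open Scope ring_scope.

Definition A_decomposition (d l : nat) (s t : rat) : Prop :=
  exists (y1 y2 alpha beta : rat),
    [/\ in_A d alpha beta, s = alpha * y1 ^+ l, t = beta * y2 ^+ l
      & ((d <= 50)%N -> exists z1 z2 : int, y1 = z1%:~R /\ y2 = z2%:~R)].

Lemma A_decompositionN d l s t :
  odd l -> A_decomposition d l s t -> A_decomposition d l (- s) t.
Proof.
move=> l_odd [y1 [y2 [alpha [beta [inA s_eq t_eq ints]]]]].
exists (- y1), y2, alpha, beta; split=> //.
  by rewrite exprNn -signr_odd l_odd expr1 s_eq; ring.
by move=> /ints[z1 [z2 [-> ->]]]; exists (- z1), z2; rewrite rmorphN.
Qed.

(* If u = 0 then y = 0, so y1 = 0 and only the valuations of alpha are constrained. *)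
Lemma A_decomposition0 d l v : (1 < d)%N -> (0 < l)%N -> (4 * v = d ^ 2 - 1)%N ->
  A_decomposition d l 0 v%:R.
Proof.
move=> d_gt1 l_gt0 four_v.
have /functional_choice[a inT_a] :
    forall q, exists a : int, prime q -> inT d q a (logn q v).
  move=> q; have [q_pr|] := boolP (prime q); last by exists 0.
  by have [a ?] := residue_in_T_quarter q_pr d_gt1 four_v; exists a.
have [||alpha alpha_gt0 ordq_alpha] := @exists_rat_ordq (d * (d ^ 2 - 1)) a.
- by rewrite muln_gt0 ltnW //= sqr_pred_gt0.
- by move=> q q_pr /inT_coprime /(_ (inT_a q q_pr))[].
exists 0, 1, alpha, v%:R; split.
- split=> //; split; first by rewrite ltr0n (quarter_sqr_pred_gt0 d_gt1 four_v).
  by move=> q q_pr; rewrite ordq_alpha // ordq_nat; exact: inT_a.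
- by rewrite expr0n gtn_eqF // mulr0.
- by rewrite expr1n mulr1.
- by exists 0, 1.
Qed.

Lemma A_decomposition_pos d l u v y : (1 < d)%N -> prime l -> (5 <= l)%N ->
  (0 < u)%N -> (0 < v)%N -> (0 < y)%N ->
  (d * u * v = 2 * y ^ l)%N -> (4 * v = u ^ 2 + (d ^ 2 - 1))%N ->
  A_decomposition d l u%:R v%:R.
Proof.
move=> d_gt1 l_pr l_ge5 u_gt0 v_gt0 y_gt0 duv four_v.
have l_coprime3 : coprime l 3.
  by rewrite coprime_sym prime_coprime // dvdn_prime2 // ltn_eqF // (leq_trans _ l_ge5).
have /functional_choice[ab res_ab] : forall q, exists ab : int * int, prime q ->
    [/\ inT d q ab.1 ab.2, (l%:Z %| (logn q u)%:Z - ab.1)%Z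
      & (l%:Z %| (logn q v)%:Z - ab.2)%Z].
  move=> q; have [q_pr|] := boolP (prime q); last by exists (0, 0).
  have [a [b ?]] := residues_in_T q_pr l_coprime3 d_gt1 u_gt0 v_gt0 y_gt0 duv four_v.
  by exists (a, b).
have N_gt0 : (0 < d * (d ^ 2 - 1))%N by rewrite muln_gt0 ltnW //= sqr_pred_gt0.
have supp q : prime q -> ~~ (q %| d * (d ^ 2 - 1))%N -> (ab q).1 = 0 /\ (ab q).2 = 0.
  by move=> q_pr q_N; have [/(inT_coprime q_N)] := res_ab q q_pr.
have dvd_u q : prime q -> (l%:Z %| (logn q u)%:Z - (ab q).1)%Z by case/res_ab.
have dvd_v q : prime q -> (l%:Z %| (logn q v)%:Z - (ab q).2)%Z by case/res_ab.
have ab_lt q : (d <= 50)%N -> prime q -> (ab q).1 < l%:Z /\ (ab q).2 < l%:Z.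
  by move=> d_le q_pr; have [/(inT_lt5 d_le q_pr)] := res_ab q q_pr; lia.
have l_gt0 := prime_gt0 l_pr.
have [r1 [r1_gt0 ordq_r1 r1_int]] :=
  @exists_power_cofactor l u _ (fun q => (ab q).1) l_gt0 u_gt0 N_gt0
    (fun q q_pr q_N => (supp q q_pr q_N).1) dvd_u.
have [r2 [r2_gt0 ordq_r2 r2_int]] :=
  @exists_power_cofactor l v _ (fun q => (ab q).2) l_gt0 v_gt0 N_gt0
    (fun q q_pr q_N => (supp q q_pr q_N).2) dvd_v.
exists r1, r2, (u%:R / r1 ^+ l), (v%:R / r2 ^+ l); split.
- split; first by rewrite divr_gt0 ?ltr0n ?exprn_gt0.
  split; first by rewrite divr_gt0 ?ltr0n ?exprn_gt0.
  by move=> q q_pr; rewrite ordq_r1 // ordq_r2 //; have [] := res_ab q q_pr.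
- by rewrite divfK // expf_neq0 // gt_eqF.
- by rewrite divfK // expf_neq0 // gt_eqF.
move=> d_le; have [z1 ->] := r1_int (fun q q_pr => (ab_lt q d_le q_pr).1).
by have [z2 ->] := r2_int (fun q q_pr => (ab_lt q d_le q_pr).2); exists z1, z2.
Qed.

Lemma A_decomposition_int d l (u v y : int) : (1 < d)%N -> prime l -> (5 <= l)%N ->
  d%:Z * u * v = 2 * y ^+ l -> 4 * v = u ^+ 2 + d%:Z ^+ 2 - 1 ->
  A_decomposition d l u%:~R v%:~R.
Proof.
move=> d_gt1 l_pr l_ge5 duv four_v.
have v_gt0 : 0 < v.
  have : 4 <= d%:Z ^+ 2 by rewrite expr2; nia.
  by have := sqr_ge0 u; lia.
move: duv four_v; rewrite -(gtz0_abs v_gt0); set v' := `|v|%N => duv four_v.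
have pos : u != 0 -> A_decomposition d l `|u|%:R v'%:R.
  move=> u_neq0; have y_neq0 : y != 0.
    have : d%:Z * u * v'%:Z != 0 by rewrite !mulf_neq0 //; lia.
    by rewrite duv; apply: contraNneq => ->; rewrite expr0n gtn_eqF ?prime_gt0 // mulr0.
  apply: (A_decomposition_pos d_gt1 l_pr l_ge5 _ _ _ (_ : _ = 2 * `|y| ^ l)%N).
  - by rewrite absz_gt0.
  - by rewrite absz_gt0 gt_eqF.
  - by rewrite absz_gt0.
  - by move/(congr1 absz): duv; rewrite !abszM abszX.
  - by apply/eqP; rewrite -eqz_nat; apply/eqP; move: four_v; rewrite -!mulnn !expr2; nia.
have [u_lt0|u_gt0|u0] := ltgtP u 0.
- have l_odd : odd l by case: (even_prime l_pr) l_ge5 => // ->.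
  rewrite -[u]opprK -(ltz0_abs u_lt0) rmorphN; apply: A_decompositionN l_odd _.
  by apply/pos; rewrite lt_eqF.
- by rewrite -(gtz0_abs u_gt0); apply/pos; rewrite gt_eqF.
have four_v' : (4 * v' = d ^ 2 - 1)%N.
  by apply/eqP; rewrite -eqz_nat; apply/eqP; move: four_v; rewrite u0 -!mulnn !expr2; nia.
by rewrite u0; exact: A_decomposition0 d_gt1 (prime_gt0 l_pr) four_v'.
Qed.

Theorem lemma4p1 (d l : nat) (x y : int) :
  (3 <= d)%N -> prime l -> (5 <= l)%N ->
  (d%:R : rat) * (2 * x%:~R + d%:R + 1) *
    (x%:~R ^+ 2 + (d%:R + 1) * x%:~R + d%:R * (d%:R + 1) / 2)
    = 2 * (y%:~R) ^+ l ->
  exists (y1 y2 alpha beta : rat),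
    [/\ in_A d alpha beta,
        2 * x%:~R + d%:R + 1 = alpha * y1 ^+ l,
        x%:~R ^+ 2 + (d%:R + 1) * x%:~R + d%:R * (d%:R + 1) / 2 = beta * y2 ^+ l
      & ((d <= 50)%N -> exists z1 z2 : int, y1 = z1%:~R /\ y2 = z2%:~R)].
Proof.
move=> d_ge3 l_pr l_ge5 eq_rat.
pose h := (d * d.+1)./2.
have h_double : (h * 2 = d * d.+1)%N.
  by rewrite muln2 -[RHS]odd_double_half oddM oddS andbN.
pose u : int := 2 * x + d%:Z + 1.
pose v : int := x ^+ 2 + (d%:Z + 1) * x + h%:Z.
have u_eq : 2 * x%:~R + d%:R + 1 = u%:~R :> rat by rewrite /u !rmorphD rmorphM.
have v_eq : x%:~R ^+ 2 + (d%:R + 1) * x%:~R + d%:R * (d%:R + 1) / 2 = v%:~R :> rat.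
  have h_rat : h%:R = d%:R * (d%:R + 1) / 2 :> rat.
    have /(congr1 (fun n => n%:R : rat)) := h_double.
    by rewrite !natrM natr1 => <-; rewrite mulfK.
  by rewrite /v !intrD !intrM intrD expr2 -h_rat.
rewrite u_eq v_eq in eq_rat *.
apply: (A_decomposition_int (y := y) (ltnW d_ge3) l_pr l_ge5).
  by apply: (@intr_inj rat); rewrite !intrM rmorphXn.
by rewrite /v /u; move: h_double; clear; nia.
Qed.
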